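(* Let $\hat n_1,\hat n_2,\hat n_3\in\mathbb{R}^3$ be unit vectors, $\eta\in[0,1]$, and $\mathcal{M}_k$ the qubit POVM $\{\tfrac12\mathbf{1}+\tfrac\eta2X_k\vec\sigma\cdot\hat n_k\}_{X_k\in\{+1,-1\}}$, and suppose each pair $\mathcal{M}_i,\mathcal{M}_j$ ($i\neq j$) admits a joint measurement $\mathcal{M}_{ij}$. Then in any generalized-noncontextual ontological model of quantum theory, for every ontic state $\lambda$ (and hence for every preparation), $$R_3=\frac13\sum_{i<j}p(X_i\neq X_j|\mathcal{M}_{ij};\lambda)\leq1-\frac\eta3.$$
   Context: An ontological model of quantum theory specifies ontic states $\lambda$, distributions $p(\lambda|P)$ for preparations and response functions $p(X|M;\lambda)$ for measurement procedures reproducing quantum statistics. It is measurement-noncontextual if procedures realizing the same POVM have identical response functions, preparation-noncontextual if procedures realizing the same density operator have identical distributions, and generalized-noncontextual if both hold. A joint measurement of POVMs $\{E^i_{X_i}\},\{E^j_{X_j}\}$ is a POVM $\{F_{X_iX_j}\}$ with $\sum_{X_j}F_{X_iX_j}=E^i_{X_i}$ and $\sum_{X_i}F_{X_iX_j}=E^j_{X_j}$. *)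

From HB Require Import structures.
From mathcomp Require Import all_boot all_order all_algebra.
From mathcomp Require Import all_classical all_reals all_analysis.
From mathcomp Require Import complex.
Set Implicit Arguments. Unset Strict Implicit. Unset Printing Implicit Defensive.
Import Order.TTheory GRing.Theory Num.Theory.
Local Open Scope ring_scope.

Section Qubit.
Variable R : rcfType.
Local Notation C := R[i].

Definition adj2 (m n : nat) (A : 'M[C]_(m, n)) : 'M[C]_(n, m) :=
  (map_mx (fun z : C => (z^*)%C) A)^T.

(* positive semidefinite operator on C^2: <v, A v> >= 0 for all v
   (in the partial order of C, 0 <= z means z is real and nonnegative) *)
Definition psd (A : 'M[C]_2) : Prop :=
  forall v : 'cV[C]_2, 0 <= (adj2 v *m A *m v) 0 0.

Definition is_density (rho : 'M[C]_2) : Prop := psd rho /\ \tr rho = 1.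

Definition is_povm (O : finType) (E : O -> 'M[C]_2) : Prop :=
  (forall o, psd (E o)) /\ \sum_(o : O) E o = 1%:M.

Definition is_joint_measurement (O1 O2 : finType)
  (E1 : O1 -> 'M[C]_2) (E2 : O2 -> 'M[C]_2) (F : O1 * O2 -> 'M[C]_2) : Prop :=
  is_povm F /\
  (forall x1, \sum_(x2 : O2) F (x1, x2) = E1 x1) /\
  (forall x2, \sum_(x1 : O1) F (x1, x2) = E2 x2).

Definition pauliX : 'M[C]_2 :=
  \matrix_(i < 2, j < 2) (if (i : nat) != j then 1 else 0).
Definition pauliY : 'M[C]_2 :=
  \matrix_(i < 2, j < 2)
    (if ((i : nat) == 0%N) && ((j : nat) == 1%N) then - 'i%C
     else if ((i : nat) == 1%N) && ((j : nat) == 0%N) then 'i%C else 0).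
Definition pauliZ : 'M[C]_2 :=
  \matrix_(i < 2, j < 2)
    (if (i : nat) == j then (if (i : nat) == 0%N then 1 else -1) else 0).

Definition unit_vec (n : 'rV[R]_3) : Prop := \sum_(k < 3) n 0 k ^+ 2 = 1.

Definition sigma_dot (n : 'rV[R]_3) : 'M[C]_2 :=
  (n 0 0)%:C%C *: pauliX + (n 0 1)%:C%C *: pauliY + (n 0 2)%:C%C *: pauliZ.

(* outcome X in {+1,-1}, encoded as a bool: true = +1, false = -1 *)
Definition sgnb (b : bool) : R := if b then 1 else -1.

Definition unsharp_povm (eta : R) (n : 'rV[R]_3) (X : bool) : 'M[C]_2 :=
  (2^-1 : C) *: 1%:M + (sgnb X * eta / 2)%:C%C *: sigma_dot n.

End Qubit.

(* Procedures are abstract; each preparation procedure realizes a density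
   operator and each measurement procedure (with finite outcome set O)
   realizes a POVM.  The set of procedures contains a realization of
   every quantum state / POVM and is closed under convex mixing and classical
   post-processing, which the model represents in the standard way. *)
Record ontological_model (R : realType) (d : measure_display)
    (Lambda : measurableType d) := OntModel {
  prep : Type;
  state : prep -> 'M[R[i]]_2;
  dist : prep -> probability Lambda R;
  meas : finType -> Type;
  povm : forall O : finType, meas O -> O -> 'M[R[i]]_2;
  resp : forall O : finType, meas O -> O -> Lambda -> R;

  state_density : forall P, is_density (state P);
  povm_valid : forall O (M : meas O), is_povm (povm M);
  resp_ge0 : forall O (M : meas O) o l, 0 <= resp M o l;
  resp_sum1 : forall O (M : meas O) l, \sum_(o : O) resp M o l = 1;
  resp_measurable : forall O (M : meas O) o, measurable_fun setT (resp M o);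
  born_rule : forall P O (M : meas O) o,
    (\int[dist P]_l (resp M o l)%:E)%E
      = (complex.Re (\tr (state P *m povm M o)))%:E;

  prep_complete : forall rho, is_density rho -> exists P, state P = rho;
  meas_complete : forall (O : finType) (E : O -> 'M[R[i]]_2),
    is_povm E -> exists M : meas O, povm M = E;

  prep_mixture : forall (p : R) P1 P2, 0 <= p <= 1 ->
    exists P, state P = (p%:C)%C *: state P1 + ((1 - p)%:C)%C *: state P2 /\
      (forall A, measurable A ->
         dist P A = (p%:E * dist P1 A + (1 - p)%:E * dist P2 A)%E);
  meas_mixture : forall (O : finType) (p : R) (M1 M2 : meas O), 0 <= p <= 1 ->
    exists M : meas O,
      (forall o, povm M o = (p%:C)%C *: povm M1 o + ((1 - p)%:C)%C *: povm M2 o) /\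
      (forall o l, resp M o l = p * resp M1 o l + (1 - p) * resp M2 o l);
  meas_postprocess : forall (O O' : finType) (M : meas O) (q : O -> O' -> R),
    (forall o o', 0 <= q o o') -> (forall o, \sum_(o' : O') q o o' = 1) ->
    exists M' : meas O',
      (forall o', povm M' o' = \sum_(o : O) ((q o o')%:C)%C *: povm M o) /\
      (forall o' l, resp M' o' l = \sum_(o : O) q o o' * resp M o l)
}.

Arguments state {R d Lambda} _ _.
Arguments dist {R d Lambda} _ _.
Arguments povm {R d Lambda} _ {O} _ _.
Arguments resp {R d Lambda} _ {O} _ _ _.

Definition measurement_noncontextual R d (Lambda : measurableType d)
    (T : ontological_model R Lambda) : Prop :=
  forall (O : finType) (M1 M2 : meas T O),
    povm T M1 = povm T M2 -> resp T M1 = resp T M2.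

Definition preparation_noncontextual R d (Lambda : measurableType d)
    (T : ontological_model R Lambda) : Prop :=
  forall P1 P2 : prep T, state T P1 = state T P2 -> dist T P1 = dist T P2.

Definition generalized_noncontextual R d (Lambda : measurableType d)
    (T : ontological_model R Lambda) : Prop :=
  measurement_noncontextual T /\ preparation_noncontextual T.

Definition prob_neq R d (Lambda : measurableType d)
    (T : ontological_model R Lambda) (M : meas T (bool * bool)%type) (l : Lambda) : R :=
  resp T M (true, false) l + resp T M (false, true) l.

From HB Require Import structures.
From mathcomp Require Import all_boot all_order all_algebra.
From mathcomp Require Import all_classical all_reals all_analysis.
From mathcomp Require Import complex.
From mathcomp Require Import measurable_realfun.
From mathcomp Require Import ring lra.
Import Order.TTheory GRing.Theory Num.Theory.
Set Implicit Arguments. Unset Strict Implicit.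
Local Open Scope classical_set_scope.
Local Open Scope ring_scope.

(* Noncontextuality forces two things on the response functions of the model.
   Preparation noncontextuality, applied to the two decompositions
   [1/2 rho + 1/2 (1 - rho) = 1/2 Pi_+ + 1/2 Pi_-] of the maximally mixed state,
   makes the projective measurement [{Pi_+, Pi_-}] along [n_k] outcome-deterministic
   almost everywhere.  Measurement noncontextuality, applied to [M_k] written as
   [eta] times the projective measurement plus [1 - eta] times a fair coin, makes the
   response of [M_k] equal to [eta s_k + (1 - eta)/2] with [s_k] in [{0, 1}].  The
   marginals of [M_ij] have these responses, which bounds [p(X_i <> X_j)] by
   [1 - eta] when [s_i = s_j] and by [1] otherwise; among three bits some pair
   agrees, whence [R_3 <= 1 - eta/3]. *)

Local Notation sharp_povm := (unsharp_povm 1).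

Section Qubit.
Variable R : rcfType.
Local Notation C := R[i].

Lemma adj2M m n p (A : 'M[C]_(m, n)) (B : 'M[C]_(n, p)) :
  adj2 (A *m B) = adj2 B *m adj2 A.
Proof. by rewrite /adj2 map_mxM trmx_mul. Qed.

Lemma adj2_mul_ge0 (w : 'cV[C]_2) : 0 <= (adj2 w *m w) 0 0.
Proof.
rewrite mxE; apply: sumr_ge0 => k _; rewrite !mxE mulrC; exact: mulcJ_ge0.
Qed.

Lemma psd_hermitian_idem (A : 'M[C]_2) : adj2 A = A -> A *m A = A -> psd A.
Proof.
move=> hA hAA v.
have -> : adj2 v *m A *m v = adj2 (A *m v) *m (A *m v).
  by rewrite adj2M hA -{1}hAA !mulmxA.
exact: adj2_mul_ge0.
Qed.

Lemma sum2 (F : 'I_2 -> C) : \sum_(i < 2) F i = F 0 + F 1.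
Proof. by rewrite !big_ord_recl big_ord0 addr0; congr (F _ + F _); apply/val_inj. Qed.

Lemma adj2_quadform (A : 'M[C]_2) (v : 'cV[C]_2) : (adj2 v *m A *m v) 0 0 =
  (v 0 0)^*%C * A 0 0 * v 0 0 + (v 0 0)^*%C * A 0 1 * v 1 0
  + (v 1 0)^*%C * A 1 0 * v 0 0 + (v 1 0)^*%C * A 1 1 * v 1 0.
Proof. by rewrite /adj2 mxE sum2 !mxE !sum2 !mxE; ring. Qed.

(* For unit trace, [<v, (1 - rho) v> = <w, rho w>] with [w = (- conj v1, conj v0)]. *)
Lemma density_compl (rho : 'M[C]_2) : is_density rho -> is_density (1%:M - rho).
Proof.
case=> rho_psd rho_tr; split; last first.
  by move: rho_tr; rewrite /mxtrace !sum2 !mxE /= => <-; ring.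
move=> v.
pose w : 'cV[C]_2 := \col_(k < 2) (if (k : nat) == 0%N then - (v 1 0)^*%C else (v 0 0)^*%C).
suff -> : (adj2 v *m (1%:M - rho) *m v) 0 0 = (adj2 w *m rho *m w) 0 0 by exact: rho_psd.
have conjN (z : C) : (- z)^*%C = - z^*%C by case: z.
move: rho_tr; rewrite /mxtrace sum2 !adj2_quadform /w !mxE /= conjN !conjcK => rho_tr.
have -> : rho 1 1 = 1 - rho 0 0 by rewrite -rho_tr; ring.
ring.
Qed.

Lemma half_mix_of_sum1 (A B : 'M[C]_2) : A + B = 1%:M ->
  (2^-1 : R)%:C%C *: A + (1 - 2^-1 : R)%:C%C *: B = (2^-1 : R)%:C%C *: 1%:M.
Proof.
move=> <-; have -> : (1 - 2^-1 : R) = 2^-1 by field.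
by rewrite scalerDr.
Qed.

Lemma unit_vecE (n : 'rV[R]_3) : unit_vec n -> n 0 0 ^+ 2 + n 0 1 ^+ 2 + n 0 2 ^+ 2 = 1.
Proof.
rewrite /unit_vec !big_ord_recl big_ord0 addr0 addrA => <-.
by congr (_ ^+ 2 + _ ^+ 2 + _ ^+ 2); congr (n _ _); apply/val_inj.
Qed.

Definition bloch_mx (t : R) (n : 'rV[R]_3) : 'M[C]_2 :=
  \matrix_(i < 2, j < 2)
    if (i : nat) == 0%N then
      if (j : nat) == 0%N then ((2^-1 + t * n 0 2) +i* 0)%C
      else ((t * n 0 0) +i* - (t * n 0 1))%C
    else
      if (j : nat) == 0%N then ((t * n 0 0) +i* (t * n 0 1))%C
      else ((2^-1 - t * n 0 2) +i* 0)%C.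

Ltac complex_eq := apply/eqP; rewrite eq_complex /=; apply/andP; split; apply/eqP.
Ltac ord2_case i := case: i => [[|[|//]] ?].

Lemma unsharp_povmE (eta : R) (n : 'rV[R]_3) b :
  unsharp_povm eta n b = bloch_mx (sgnb R b * eta / 2) n.
Proof.
apply/matrixP => i j.
have inv2C : (2^-1 : C) = (2^-1 : R)%:C%C by rewrite fmorphV rmorph_nat.
rewrite /unsharp_povm /sigma_dot inv2C !mxE.
move: (sgnb R b * eta / 2) => t.
by ord2_case i; ord2_case j; rewrite /=; complex_eq; ring.
Qed.

Lemma sharp_povm_idem (n : 'rV[R]_3) b : unit_vec n ->
  sharp_povm n b *m sharp_povm n b = sharp_povm n b.
Proof.
move=> /unit_vecE hn; apply/matrixP => i j.
rewrite unsharp_povmE mxE !sum2 !mxE /sgnb.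
by ord2_case i; ord2_case j; case: b => /=; complex_eq; nra.
Qed.

Lemma sharp_povm_orth (n : 'rV[R]_3) b c : unit_vec n -> b != c ->
  sharp_povm n b *m sharp_povm n c = 0.
Proof.
move=> /unit_vecE hn; case: b; case: c => // _; apply/matrixP => i j.
all: rewrite !unsharp_povmE mxE !sum2 !mxE /sgnb.
all: by ord2_case i; ord2_case j => /=; complex_eq; nra.
Qed.

Lemma sharp_povm_hermitian (n : 'rV[R]_3) b : adj2 (sharp_povm n b) = sharp_povm n b.
Proof.
apply/matrixP => i j; rewrite /adj2 unsharp_povmE !mxE.
by ord2_case i; ord2_case j => /=; complex_eq; ring.
Qed.

Lemma unsharp_povm_tr (eta : R) (n : 'rV[R]_3) b : \tr (unsharp_povm eta n b) = 1.
Proof. by rewrite unsharp_povmE /mxtrace sum2 !mxE /=; complex_eq; field. Qed.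

Lemma unsharp_povm_sum (eta : R) (n : 'rV[R]_3) : \sum_(o : bool) unsharp_povm eta n o = 1%:M.
Proof.
apply/matrixP => i j; rewrite summxE big_bool /= !unsharp_povmE !mxE /sgnb.
by ord2_case i; ord2_case j => /=; complex_eq; field.
Qed.

Lemma unsharp_povm_mix (eta : R) (n : 'rV[R]_3) b : unsharp_povm eta n b =
  eta%:C%C *: sharp_povm n b
  + (1 - eta)%:C%C *: \sum_(o : bool) ((2^-1 : R)%:C%C *: sharp_povm n o).
Proof.
apply/matrixP => i j.
rewrite !unsharp_povmE !mxE summxE big_bool /= !mxE /sgnb.
by ord2_case i; ord2_case j; case: b => /=; complex_eq; field.
Qed.

Lemma sharp_povm_psd (n : 'rV[R]_3) b : unit_vec n -> psd (sharp_povm n b).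
Proof.
by move=> hn; apply: psd_hermitian_idem; [exact: sharp_povm_hermitian | exact: sharp_povm_idem].
Qed.

Lemma sharp_povm_is_povm (n : 'rV[R]_3) : unit_vec n -> is_povm (sharp_povm n).
Proof. by move=> hn; split; [move=> b; exact: sharp_povm_psd | exact: unsharp_povm_sum]. Qed.

Lemma sharp_povm_density (n : 'rV[R]_3) b : unit_vec n -> is_density (sharp_povm n b).
Proof. by move=> hn; split; [exact: sharp_povm_psd | exact: unsharp_povm_tr]. Qed.

Lemma sharp_povm_born (n : 'rV[R]_3) b c : unit_vec n -> b != c ->
  \tr (sharp_povm n b *m sharp_povm n c) = 0.
Proof. by move=> hn bc; rewrite sharp_povm_orth // mxtrace0. Qed.

End Qubit.

Lemma ae_mixture d (T : measurableType d) (R : realType)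
    (mu nu1 nu2 : {measure set T -> \bar R}) (p : R) (D : set T) :
  0 < p < 1 ->
  (forall A, measurable A -> mu A = (p%:E * nu1 A + (1 - p)%:E * nu2 A)%E) ->
  {ae mu, forall x, D x} <-> {ae nu1, forall x, D x} /\ {ae nu2, forall x, D x}.
Proof.
move=> /andP[p0 p1] hmu; rewrite /prop_near1 /nbhs /=; split.
  move=> [N [mN muN0 DN]].
  have /eqP : (p%:E * nu1 N + (1 - p)%:E * nu2 N = 0)%E by rewrite -hmu.
  rewrite padde_eq0 ?mule_ge0 ?lee_fin ?subr_ge0 ?(ltW p0) ?(ltW p1) //.
  rewrite !mule_eq0 !eqe (gt_eqF p0) subr_eq0 (gt_eqF p1) /= => /andP[/eqP N1 /eqP N2].
  by split; exists N.
move=> [[N1 [mN1 N10 DN1]] [N2 [mN2 N20 DN2]]].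
have mN : measurable (N1 `&` N2) by exact: measurableI.
exists (N1 `&` N2); split => //; last by move=> x Dx; split; [exact: DN1 | exact: DN2].
have nu1N : nu1 (N1 `&` N2) = 0%E by apply/eqP; rewrite -measure_le0 -N10 measureIl.
have nu2N : nu2 (N1 `&` N2) = 0%E by apply/eqP; rewrite -measure_le0 -N20 measureIr.
by rewrite hmu // nu1N nu2N !mule0 adde0.
Qed.

Lemma ae_eq0_of_integral0 d (T : measurableType d) (R : realType)
    (mu : {measure set T -> \bar R}) (f : T -> R) :
  (forall x, 0 <= f x) -> measurable_fun setT f ->
  (\int[mu]_x (f x)%:E)%E = 0%E -> {ae mu, forall x, f x = 0}.
Proof.
move=> f_ge0 mf int0.
have mEf := (measurable_EFinP _ _).2 mf.
have : ae_eq mu setT (EFin \o f) (cst 0%E).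
  apply/(ae_eq_integral_abs mu measurableT mEf); rewrite -int0.
  by apply: eq_integral => x _; rewrite /= ger0_norm.
by apply: filterS => x /(_ I) [].
Qed.

Lemma big_pair_fst (V : nmodType) (I J : finType) (G : I * J -> V) i :
  \sum_(o | o.1 == i) G o = \sum_j G (i, j).
Proof.
transitivity (\sum_(x | x == i) \sum_j G (x, j)); last by rewrite big_pred1_eq.
rewrite pair_big /=.
by apply: eq_big => [[x y]|[x y]]; rewrite ?andbT.
Qed.

Lemma big_pair_snd (V : nmodType) (I J : finType) (G : I * J -> V) j :
  \sum_(o | o.2 == j) G o = \sum_i G (i, j).
Proof.
transitivity (\sum_i \sum_(y | y == j) G (i, y)).
  by rewrite pair_big /=; apply: eq_big => [[x y]|[x y]].
by apply: eq_bigr => x _; rewrite big_pred1_eq.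
Qed.

Section OntologicalModel.
Variables (R : realType) (d : measure_display) (Lambda : measurableType d).
Variable T : ontological_model R Lambda.

Lemma meas_coarse_grain (O O' : finType) (M : meas T O) (f : O -> O') :
  exists M' : meas T O',
    (forall o', povm T M' o' = \sum_(o | f o == o') povm T M o) /\
    (forall o' l, resp T M' o' l = \sum_(o | f o == o') resp T M o l).
Proof.
have [||M' [hp hr]] := meas_postprocess M (q := fun o o' => (f o == o')%:R).
- by move=> o o'; exact: ler0n.
- move=> o; rewrite (bigD1 (f o)) //= eqxx big1 ?addr0 // => o' /negbTE.
  by rewrite eq_sym => ->.
exists M'; split => [x | x l]; rewrite (hp, hr) [RHS]big_mkcond; apply: eq_bigr => o _.
- by case: eqP => _; rewrite ?rmorph1 ?rmorph0 ?scale1r ?scale0r.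
- by case: eqP => _; rewrite ?mul1r ?mul0r.
Qed.

Lemma joint_marginal_fst (O1 O2 : finType) (E1 : O1 -> 'M[R[i]]_2) (E2 : O2 -> 'M[R[i]]_2)
    F (M : meas T (O1 * O2)%type) :
  is_joint_measurement E1 E2 F -> povm T M = F ->
  exists M1 : meas T O1, povm T M1 = E1 /\
    forall x l, resp T M1 x l = \sum_y resp T M (x, y) l.
Proof.
move=> [_ [hE1 _]] hM; have [M1 [hp hr]] := meas_coarse_grain M fst.
exists M1; split => [|x l]; last by rewrite hr big_pair_fst.
by apply/funext => x; rewrite hp hM big_pair_fst hE1.
Qed.

Lemma joint_marginal_snd (O1 O2 : finType) (E1 : O1 -> 'M[R[i]]_2) (E2 : O2 -> 'M[R[i]]_2)
    F (M : meas T (O1 * O2)%type) :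
  is_joint_measurement E1 E2 F -> povm T M = F ->
  exists M2 : meas T O2, povm T M2 = E2 /\
    forall y l, resp T M2 y l = \sum_x resp T M (x, y) l.
Proof.
move=> [_ [_ hE2]] hM; have [M2 [hp hr]] := meas_coarse_grain M snd.
exists M2; split => [|y l]; last by rewrite hr big_pair_snd.
by apply/funext => y; rewrite hp hM big_pair_snd hE2.
Qed.

Lemma resp_ae0_of_born0 (P : prep T) (O : finType) (M : meas T O) o :
  complex.Re (\tr (state T P *m povm T M o)) = 0 ->
  {ae dist T P, forall l, resp T M o l = 0}.
Proof.
move=> born0; apply: ae_eq0_of_integral0 (resp_ge0 M o) (resp_measurable M o) _.
by rewrite born_rule born0.
Qed.

Lemma sharp_resp_bit (hPNC : preparation_noncontextual T) (n : 'rV[R]_3)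
    (S : meas T bool) :
  unit_vec n -> povm T S = sharp_povm n -> forall P : prep T,
  {ae dist T P, forall l, resp T S true l = 0 \/ resp T S true l = 1}.
Proof.
move=> hn hS P.
have half01 : 0 <= (2^-1 : R) <= 1 by apply/andP; split; lra.
have half_open : 0 < (2^-1 : R) < 1 by apply/andP; split; lra.
have [Pt hPt] := prep_complete T (sharp_povm_density true hn).
have [Pf hPf] := prep_complete T (sharp_povm_density false hn).
have [Q0 [hQ0 dQ0]] := prep_mixture Pt Pf half01.
have [Pc hPc] := prep_complete T (density_compl (state_density P)).
have [Q1 [hQ1 dQ1]] := prep_mixture P Pc half01.
have dQ : dist T Q1 = dist T Q0.
  apply: hPNC; rewrite hQ1 hQ0 hPc hPt hPf !half_mix_of_sum1 //.
    by rewrite -(unsharp_povm_sum 1 n) big_bool.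
  by rewrite addrC subrK.
suff /(ae_mixture _ half_open dQ1) [] : {ae dist T Q1, forall l,
  resp T S true l = 0 \/ resp T S true l = 1} by [].
rewrite dQ; apply/(ae_mixture _ half_open dQ0); split.
- apply: filterS (resp_ae0_of_born0 (M := S) (o := false) _) => [l r0|].
    by right; have := resp_sum1 S l; rewrite big_bool /= r0 addr0.
  by rewrite hPt hS sharp_povm_born.
- apply: filterS (resp_ae0_of_born0 (M := S) (o := true) _) => [l|]; first by left.
  by rewrite hPf hS sharp_povm_born.
Qed.

Section MeasurementNoncontextual.
Hypothesis hMNC : measurement_noncontextual T.
Variable eta : R.
Hypothesis eta01 : 0 <= eta <= 1.

Lemma unsharp_resp (n : 'rV[R]_3) (S M : meas T bool) :
  povm T S = sharp_povm n -> povm T M = unsharp_povm eta n ->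
  forall l, resp T M true l = eta * resp T S true l + (1 - eta) / 2.
Proof.
move=> hS hM l.
have [||coin [hcoin_povm hcoin_resp]] :=
  meas_postprocess (O' := bool) S (q := fun _ _ => (2^-1 : R)).
- by move=> _ _; rewrite invr_ge0.
- by move=> _; rewrite big_bool /=; field.
have [Mmix [hmix_povm hmix_resp]] := meas_mixture S coin eta01.
have same_povm : povm T Mmix = povm T M.
  apply/funext => o; rewrite hmix_povm hM (unsharp_povm_mix eta n o) hS.
  by rewrite hcoin_povm hS.
rewrite -(hMNC same_povm) hmix_resp hcoin_resp -big_distrr /= resp_sum1.
by field.
Qed.

Lemma joint_prob_neq_le (n1 n2 : 'rV[R]_3) F (M : meas T (bool * bool)%type)
    (S1 S2 : meas T bool) :
  is_joint_measurement (unsharp_povm eta n1) (unsharp_povm eta n2) F ->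
  povm T M = F -> povm T S1 = sharp_povm n1 -> povm T S2 = sharp_povm n2 ->
  forall l, resp T S1 true l = 0 \/ resp T S1 true l = 1 ->
  resp T S2 true l = 0 \/ resp T S2 true l = 1 ->
  prob_neq M l <= 1 - eta * (1 - (resp T S1 true l - resp T S2 true l) ^+ 2).
Proof.
move=> hJ hM hS1 hS2 l.
have [M1 [hM1 r1]] := joint_marginal_fst hJ hM.
have [M2 [hM2 r2]] := joint_marginal_snd hJ hM.
have := unsharp_resp hS1 hM1 l; rewrite r1 big_bool /=.
have := unsharp_resp hS2 hM2 l; rewrite r2 big_bool /=.
have := resp_sum1 M1 l; rewrite big_bool !r1 !big_bool /=.
have := resp_ge0 M (true, false) l; have := resp_ge0 M (false, true) l.
have := resp_ge0 M (true, true) l; have := resp_ge0 M (false, false) l.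
rewrite /prob_neq; case/andP: eta01 => eta0 eta1.
move: (resp T S1 true l) (resp T S2 true l) => s1 s2.
by move=> ? ? ? ? ? ? ? [] ? [] ?; subst; rewrite expr2; lra.
Qed.

End MeasurementNoncontextual.

End OntologicalModel.


Lemma mean_three_pairs_le (R : realFieldType) (eta s1 s2 s3 a b c : R) :
  0 <= eta -> s1 = 0 \/ s1 = 1 -> s2 = 0 \/ s2 = 1 -> s3 = 0 \/ s3 = 1 ->
  a <= 1 - eta * (1 - (s1 - s2) ^+ 2) -> b <= 1 - eta * (1 - (s1 - s3) ^+ 2) ->
  c <= 1 - eta * (1 - (s2 - s3) ^+ 2) -> 3^-1 * (a + b + c) <= 1 - eta / 3.
Proof. by move=> ? [] ? [] ? [] ?; subst; rewrite !expr2; lra. Qed.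

Unset Implicit Arguments.

Theorem mainTheorem15 (R : realType) (d : measure_display) (Lambda : measurableType d)
  (T : ontological_model R Lambda)
  (n1 n2 n3 : 'rV[R]_3) (eta : R)
  (F12 F13 F23 : (bool * bool)%type -> 'M[R[i]]_2)
  (M12 M13 M23 : meas T (bool * bool)%type) :
  generalized_noncontextual T ->
  unit_vec n1 -> unit_vec n2 -> unit_vec n3 ->
  0 <= eta <= 1 ->
  is_joint_measurement (unsharp_povm eta n1) (unsharp_povm eta n2) F12 ->
  is_joint_measurement (unsharp_povm eta n1) (unsharp_povm eta n3) F13 ->
  is_joint_measurement (unsharp_povm eta n2) (unsharp_povm eta n3) F23 ->
  povm T M12 = F12 -> povm T M13 = F13 -> povm T M23 = F23 ->
  forall P : prep T,
    {ae dist T P, forall l : Lambda,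
      3^-1 * (prob_neq M12 l + prob_neq M13 l + prob_neq M23 l) <= 1 - eta / 3}.
Proof.
move=> [hMNC hPNC] hn1 hn2 hn3 eta01 hJ12 hJ13 hJ23 hM12 hM13 hM23 P.
have [S1 hS1] := meas_complete T (sharp_povm_is_povm hn1).
have [S2 hS2] := meas_complete T (sharp_povm_is_povm hn2).
have [S3 hS3] := meas_complete T (sharp_povm_is_povm hn3).
apply: filterS3 (sharp_resp_bit hPNC hn1 hS1 P) (sharp_resp_bit hPNC hn2 hS2 P)
  (sharp_resp_bit hPNC hn3 hS3 P) => l b1 b2 b3.
apply: (mean_three_pairs_le _ b1 b2 b3); first by case/andP: eta01.
- exact: (joint_prob_neq_le hMNC eta01 hJ12 hM12 hS1 hS2 b1 b2).
- exact: (joint_prob_neq_le hMNC eta01 hJ13 hM13 hS1 hS3 b1 b3).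
- exact: (joint_prob_neq_le hMNC eta01 hJ23 hM23 hS2 hS3 b2 b3).
Qed.
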